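(* Let $n$ be a positive integer and $(A_i)_{i\in I}$ a family of pairwise commuting matrices in $M_n(\mathbb{C})$ such that $\sum_{i\in I}A_i^*A_i$ converges to a scalar matrix (a scalar multiple of the identity). Then every $A_i$ is normal, and consequently the $A_i$ generate a commutative $C^*$-algebra.
   Context: The sum over the (possibly infinite) index set $I$ is the limit of the net of finite partial sums. *)

From HB Require Import structures.
From mathcomp Require Import all_boot all_order all_algebra.
From mathcomp Require Import finmap.
From mathcomp Require Import complex.
From mathcomp Require Import reals.

Set Implicit Arguments.
Unset Strict Implicit.
Unset Printing Implicit Defensive.

Import Order.TTheory GRing.Theory Num.Theory.
Local Open Scope ring_scope.
Local Open Scope fset_scope.
Local Open Scope complex_scope.

Definition adjmx (R : realType) (m n : nat) (A : 'M[R[i]]_(m, n)) : 'M[R[i]]_(n, m) :=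
  (map_mx Num.conj A)^T.

Definition normal_cmx (R : realType) (n : nat) (A : 'M[R[i]]_n) : Prop :=
  adjmx A *m A = A *m adjmx A.

Definition fpsum (R : realType) (I : choiceType) (n : nat)
    (B : I -> 'M[R[i]]_n) (F : {fset I}) : 'M[R[i]]_n :=
  \sum_(i <- F) B i.

(* The net of finite partial sums (indexed by finite subsets of I, directed
   by inclusion) converges to L (entrywise, equivalently in any norm on the
   finite-dimensional space M_n(C)). *)
Definition sum_converges_to (R : realType) (I : choiceType) (n : nat)
    (B : I -> 'M[R[i]]_n) (L : 'M[R[i]]_n) : Prop :=
  forall eps : R, 0 < eps ->
    exists F0 : {fset I}, forall F : {fset I}, F0 `<=` F ->
      forall j k, `|(fpsum B F - L) j k| < eps%:C.

From HB Require Import structures.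
From mathcomp Require Import all_boot all_order all_algebra.
From mathcomp Require Import finmap complex reals.
From mathcomp Require Import sesquilinear mxred spectral.
From mathcomp Require Import ring zify.
From Stdlib Require Import Classical.

Set Implicit Arguments.
Unset Strict Implicit.
Unset Printing Implicit Defensive.

Import Order.TTheory GRing.Theory Num.Theory.
Local Open Scope ring_scope.
Local Open Scope sesquilinear_scope.

(* Put B_i := A_i^* and work with row vectors, so that sum_i B_i B_i^* = c and
   the claim is B_k^* B_j = B_j B_k^*.  Let v be a joint eigenvector of the B_i,
   v B_i = mu_i v, and u := v B_k^*.  An explicit linear form on matrices vanishes
   on scalar matrices and takes at each B_j B_j^* the nonnegative value
   |v|^2 |u B_j - mu_j u|^2.  Evaluated on the partial sums of
   sum_i B_i B_i^* - c, which tend to 0, it forces u B_j = mu_j u: B_k^* maps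
   joint eigenvectors to joint eigenvectors, and B_k^* B_j, B_j B_k^* agree on
   them.  Hence the span of the joint eigenvectors is B_k^*-stable, its
   orthogonal complement is B_k-stable and contains no joint eigenvector, so it
   is zero. *)

Local Notation "Y ^!" := (orthomx Num.conj (hermitian1mx _) Y) : matrix_set_scope.

Section Adjoint.
Variable C : numClosedFieldType.

Lemma trmxC_mul m n p (A : 'M[C]_(m, n)) (B : 'M_(n, p)) :
  (A *m B)^t* = B^t* *m A^t*.
Proof. by rewrite trmx_mul map_mxM. Qed.

Lemma trmxCZ m n a (A : 'M[C]_(m, n)) : (a *: A)^t* = a^* *: A^t*.
Proof. by rewrite linearZ map_mxZ. Qed.

Lemma trmxC_comm n (A B : 'M[C]_n) :
  A *m B = B *m A -> A^t* *m B^t* = B^t* *m A^t*.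
Proof. by move=> AB; rewrite -!trmxC_mul AB. Qed.

Lemma mxtrace_trmxC_mul n (x y : 'rV[C]_n) (Q : 'M_n) :
  \tr (x^t* *m y *m Q) = dotmx (y *m Q) x.
Proof. by rewrite -mulmxA mxtrace_mulC dotmxE trace_mx11. Qed.

Lemma orthomx_stable m n (Y : 'M[C]_(m, n)) (M : 'M_n) :
  stablemx Y (M^t*) -> stablemx (Y^!)%MS M.
Proof.
move=> /submxP[E YM]; apply/orthomx1P.
rewrite -mulmxA -[M]trmxCK -trmxC_mul YM trmxC_mul mulmxA.
by have /orthomx1P -> := submx_refl (Y^!)%MS; rewrite mul0mx.
Qed.

Lemma eigenspace_capmx_neq0 n (V M : 'M[C]_n) :
  V != 0 -> stablemx V M -> exists a, (V :&: eigenspace M a)%MS != 0.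
Proof.
move=> V_neq0 VM; have rV_gt0 : (0 < \rank V)%N by rewrite lt0n mxrank_eq0.
have [a /eigenvalueP[x /eigenspaceP]] := eigenvalue_closed (restrictmx V M) rV_gt0.
rewrite sub_eigenspace_conjmx ?stablemx_row_base ?row_base_free // => xV x_neq0.
exists a; apply: contraNneq x_neq0 => capV0.
have : (x *m row_base V <= V :&: eigenspace M a)%MS.
  by rewrite sub_capmx xV andbT (submx_trans (submxMl _ _)) ?eq_row_base.
by rewrite capV0 submx0 mulmx_free_eq0 ?row_base_free.
Qed.

(* \tr (defect_mx v X *m Q) = |v|^2 <u Q, u> + |u|^2 <v Q, v>
                                - |v|^2 (<v Q, u X> + <u X Q, v>)
   with u := v X^* and <x, y> := dotmx x y. *)
Definition defect_mx n (v : 'rV[C]_n) (X : 'M[C]_n) : 'M[C]_n :=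
  let u := v *m X^t* in let w := u *m X in
  dotmx v v *: (u^t* *m u) + dotmx u u *: (v^t* *m v)
  - dotmx v v *: (v^t* *m w + w^t* *m v).

Section DefectMx.
Variables (n : nat) (v : 'rV[C]_n) (X : 'M[C]_n).
Local Notation u := (v *m X^t*).

Let trmxC_u : u^t* = X *m v^t*.
Proof. by rewrite trmxC_mul trmxCK. Qed.

Lemma mxtrace_defect_mx : \tr (defect_mx v X) = 0.
Proof.
have trE (x y : 'rV[C]_n) : \tr (x^t* *m y) = dotmx y x.
  by rewrite -[_ *m y]mulmx1 mxtrace_trmxC_mul mulmx1.
have wv : dotmx (u *m X) v = dotmx u u by rewrite !dotmxE -mulmxA trmxC_u.
have vw : dotmx v (u *m X) = dotmx u u by rewrite !dotmxE trmxC_mul mulmxA.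
by rewrite /defect_mx !linearD !linearN !linearZ /= !trE wv vw; ring.
Qed.

Lemma mxtrace_defect_mxM (B : 'M[C]_n) mu :
  X *m B = B *m X -> v *m B = mu *: v ->
  \tr (defect_mx v X *m (B *m B^t*))
    = dotmx v v * dotmx (u *m B - mu *: u) (u *m B - mu *: u).
Proof.
move=> XB vB.
have vv : dotmx (v *m (B *m B^t*)) v = mu * mu^* * dotmx v v.
  rewrite !dotmxE mulmxA -mulmxA -trmxC_mul vB trmxCZ.
  by rewrite -scalemxAl -scalemxAr scalerA mxE.
have uu : dotmx (u *m (B *m B^t*)) u = dotmx (u *m B) (u *m B).
  by rewrite !dotmxE [(u *m B)^t*]trmxC_mul !mulmxA.
have wv : dotmx (u *m X *m (B *m B^t*)) v = mu^* * dotmx (u *m B) u.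
  rewrite !dotmxE !mulmxA -mulmxA -trmxC_mul vB trmxCZ -scalemxAr mxE trmxC_u.
  by rewrite -(mulmxA u X B) XB !mulmxA.
have vw : dotmx (v *m (B *m B^t*)) (u *m X) = mu * dotmx u (u *m B).
  rewrite !dotmxE !mulmxA vB -!scalemxAl mxE; congr (_ * _).
  rewrite [(u *m X)^t*]trmxC_mul [(u *m B)^t*]trmxC_mul !mulmxA.
  by rewrite -(mulmxA v) -(trmxC_comm XB) !mulmxA.
set d := u *m B - mu *: u.
rewrite /defect_mx !(mulmxDl, mulNmx) -!scalemxAl mulmxDl !linearD !linearN.
rewrite !linearZ /= !mxtrace_trmxC_mul vv uu wv vw {}/d.
rewrite !(linearBl, linearBr, linearZl_LR, linearZr_LR) /=.
(* [ring] does not treat the conjugate as an atom. *)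
by move: mu^* => nu; ring.
Qed.

End DefectMx.
End Adjoint.

Section JointEigenvectors.
Variables (C : numClosedFieldType) (I : Type) (n : nat) (B : I -> 'M[C]_n).

(* The zero vector counts as a joint eigenvector. *)
Definition joint_eigen (v : 'rV[C]_n) := forall i, exists a, v *m B i = a *: v.

Hypothesis B_comm : forall i j, B i *m B j = B j *m B i.

Lemma joint_eigenvector_sub (V : 'M_n) :
  V != 0 -> (forall i, stablemx V (B i)) ->
  exists2 v, v != 0 & (v <= V)%MS /\ joint_eigen v.
Proof.
elim: {V}(\rank V).+1 {-2}V (ltnSn (\rank V)) => // r IH V rV V_neq0 V_st.
case: (classic (forall i, exists a, (V <= eigenspace (B i) a)%MS)) => [V_eig|].
  have [v vV v_neq0] := rowV0Pn V_neq0; exists v => //; split=> // i.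
  by have [a Va] := V_eig i; exists a; apply/eigenspaceP; apply: submx_trans Va.
move=> /not_all_ex_not[i V_not_eig].
have [a W_neq0] := eigenspace_capmx_neq0 V_neq0 (V_st i).
set W := (V :&: eigenspace (B i) a)%MS in W_neq0.
have WV : (W <= V)%MS := capmxSl _ _.
have W_st j : stablemx W (B j).
  rewrite sub_capmx (submx_trans (submxMr _ WV) (V_st j)) /=.
  apply: submx_trans (submxMr _ (capmxSr _ _)) _.
  exact: comm_mx_stable_eigenspace (B_comm i j).
have rW : (\rank W < r)%N.
  rewrite -ltnS (leq_trans _ rV) // ltnS (ltn_leqif (mxrank_leqif_sup WV)).
  by apply/negP => /submx_trans/(_ (capmxSr _ _)) Va; apply: V_not_eig; exists a.
have [v v_neq0 [vW v_eig]] := IH W rW W_neq0 W_st.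
by exists v => //; split=> //; apply: submx_trans WV.
Qed.

Lemma joint_eigen_span :
  exists m (Y : 'M_(m, n)), (forall l, joint_eigen (row l Y)) /\
    (forall v, joint_eigen v -> (v <= Y)%MS).
Proof.
suff ext k m (Y : 'M_(m, n)) : (n - \rank Y <= k)%N ->
    (forall l, joint_eigen (row l Y)) ->
  exists m' (Y' : 'M_(m', n)), (forall l, joint_eigen (row l Y')) /\
    (forall v, joint_eigen v -> (v <= Y')%MS).
  by apply: (ext n 0%N 0); [rewrite leq_subr | case].
elim: k m Y => [|k IH] m Y rY Y_eig.
  exists m, Y; split=> // v _; apply: submx_full.
  by rewrite /row_full eqn_leq rank_leq_col -subn_eq0 -leqn0.
have [[v [v_eig vY]]|Y_span] :=
  classic (exists v, joint_eigen v /\ ~~ (v <= Y)%MS); last first.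
  by exists m, Y; split=> // v v_eig; apply/negPn/negP => vY; apply: Y_span; exists v.
apply: (IH _ (col_mx Y v)) => [|l].
  have := mxrank_leqif_sup (addsmxSl Y v).
  rewrite addsmx_sub submx_refl (negPf vY) addsmxE => /ltn_leqif.
  by lia.
rewrite -(splitK l); case: (split l) => l' /=; first by rewrite rowKu.
by rewrite rowKd (ord1 l'); have -> : row 0 v = v by apply/rowP => q; rewrite mxE.
Qed.

Lemma joint_eigen_mx_eq0 p (M : 'M_(n, p)) :
  (forall i v, joint_eigen v -> joint_eigen (v *m (B i)^t*)) ->
  (forall v, joint_eigen v -> v *m M = 0) -> M = 0.
Proof.
move=> adj_closed M0; have [m [Y [Y_eig Y_span]]] := joint_eigen_span.
have Y_st i : stablemx Y ((B i)^t*).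
  by apply/row_subP => l; rewrite row_mul; apply/Y_span/adj_closed/Y_eig.
have Yo0 : (Y^! = 0)%MS.
  apply/eqP; apply: contraT => Yo_neq0.
  have [v v_neq0 [vYo v_eig]] :=
    joint_eigenvector_sub Yo_neq0 (fun i => orthomx_stable (Y_st i)).
  suff : (v <= Y :&: Y^!)%MS by rewrite orthomx_ortho_disj submx0 (negPf v_neq0).
  by rewrite sub_capmx Y_span.
have [Y' Y'Y] : exists Y', Y' *m Y = 1%:M.
  apply/row_fullP.
  by rewrite /row_full -[X in _ == X](add_rank_ortho Y) Yo0 mxrank0 addn0.
have YM0 : Y *m M = 0.
  by apply/row_matrixP => l; rewrite row_mul row0; exact: M0.
by rewrite -[M]mul1mx -Y'Y -mulmxA YM0 mulmx0.
Qed.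

End JointEigenvectors.

Lemma ge0_le_eps_mul_eq0 (F : numFieldType) (x K : F) :
  0 <= x -> 0 <= K -> (forall e, 0 < e -> x <= e * K) -> x = 0.
Proof.
move=> x_ge0 K_ge0 x_small; have [//|x_neq0] := eqVneq x 0.
have x_gt0 : 0 < x by rewrite lt_def x_neq0.
have K1_gt0 : 0 < K + 1 by rewrite ltr_wpDl.
have := x_small _ (divr_gt0 x_gt0 K1_gt0).
by rewrite mulrAC ler_pdivlMr // ler_pM2l // gerDl ler10.
Qed.

Lemma norm_mxtrace_mul_le (F : numDomainType) n (P Q : 'M[F]_n) e :
  (forall j k, `|Q j k| <= e) -> `|\tr (P *m Q)| <= e * \sum_j \sum_k `|P j k|.
Proof.
move=> Q_le; apply: le_trans (ler_norm_sum _ _ _) _; rewrite mulr_sumr.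
apply: ler_sum => j _; rewrite mxE; apply: le_trans (ler_norm_sum _ _ _) _.
rewrite mulr_sumr; apply: ler_sum => k _.
by rewrite normrM mulrC ler_wpM2r.
Qed.

Lemma complex_gt0_real (R : rcfType) (e : R[i]) :
  0 < e -> exists2 r : R, e = (r%:C)%C & 0 < r.
Proof.
move=> e_gt0; exists (complex.Re e); first by rewrite RRe_real // gtr0_real.
by rewrite -ltcR RRe_real // gtr0_real.
Qed.

Section SumConverges.
Variables (R : realType) (I : choiceType) (n : nat).

Lemma eq_sum_converges_to (B B' : I -> 'M[R[i]]_n) L :
  (forall i, B i = B' i) -> sum_converges_to B L -> sum_converges_to B' L.
Proof.
move=> BB' BL e e_gt0; have [F0 F0P] := BL e e_gt0; exists F0 => F F0F.
by rewrite /fpsum -(eq_bigr _ (fun i _ => BB' i)); exact: F0P.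
Qed.

Lemma sum_converges_mxtrace_eq0 (B : I -> 'M[R[i]]_n) (L P : 'M[R[i]]_n) :
  sum_converges_to B L -> (forall i, 0 <= \tr (P *m B i)) ->
  \tr (P *m L) = 0 -> forall j, \tr (P *m B j) = 0.
Proof.
move=> BL B_ge0 PL0 j.
apply: (ge0_le_eps_mul_eq0 (B_ge0 j) (K := \sum_j \sum_k `|P j k|)).
  by do 2!(apply: sumr_ge0 => ? _).
move=> _ /complex_gt0_real[r -> r_gt0].
have [F0 F0P] := BL r r_gt0; pose F := (F0 `|` [fset j])%fset.
have jF : j \in F by rewrite !inE eqxx orbT.
apply: (@le_trans _ _ (\sum_(i <- F) \tr (P *m B i))).
  by rewrite (bigD1_seq j jF (fset_uniq F)) /= lerDl sumr_ge0.
rewrite -[leLHS]ger0_norm ?sumr_ge0 //.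
have -> : \sum_(i <- F) \tr (P *m B i) = \tr (P *m (fpsum B F - L)).
  by rewrite mulmxBr linearB /= PL0 subr0 /fpsum mulmx_sumr linear_sum.
apply: norm_mxtrace_mul_le => k l.
by rewrite ltW // F0P // fsubsetUl.
Qed.

Variables (B : I -> 'M[R[i]]_n) (c : R[i]).
Hypothesis B_comm : forall i j, B i *m B j = B j *m B i.
Hypothesis B_sum : sum_converges_to (fun i => B i *m (B i)^t*) c%:M.

Lemma joint_eigen_adj_comm v k j :
  joint_eigen B v -> v *m (B k)^t* *m B j = v *m B j *m (B k)^t*.
Proof.
move=> v_eig; have [->|v_neq0] := eqVneq v 0; first by rewrite !mul0mx.
pose P := defect_mx v (B k).
have P_ge0 i : 0 <= \tr (P *m (B i *m (B i)^t*)).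
  have [a vBi] := v_eig i.
  by rewrite (mxtrace_defect_mxM (B_comm k i) vBi) mulr_ge0 ?dnorm_ge0.
have PL0 : \tr (P *m c%:M) = 0.
  by rewrite mul_mx_scalar mxtraceZ mxtrace_defect_mx mulr0.
have [mu vBj] := v_eig j.
have := sum_converges_mxtrace_eq0 B_sum P_ge0 PL0 j.
rewrite (mxtrace_defect_mxM (B_comm k j) vBj) => /eqP.
rewrite mulf_eq0 !dnorm_eq0 (negPf v_neq0) subr_eq0 => /eqP ->.
by rewrite vBj -scalemxAl.
Qed.

Lemma adj_comm k j : (B k)^t* *m B j = B j *m (B k)^t*.
Proof.
apply/eqP; rewrite -subr_eq0; apply/eqP.
apply: (joint_eigen_mx_eq0 B_comm) => [i v v_eig l|v v_eig].
  have [a vBl] := v_eig l; exists a.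
  by rewrite joint_eigen_adj_comm // vBl scalemxAl.
by rewrite mulmxBr !mulmxA joint_eigen_adj_comm // subrr.
Qed.

End SumConverges.

Lemma adjmxE (R : realType) m p (M : 'M[R[i]]_(m, p)) : adjmx M = M^t*.
Proof. by rewrite /adjmx map_trmx. Qed.

Theorem corollary1p3 (R : realType) (n : nat) (I : choiceType)
    (A : I -> 'M[R[i]]_n) :
  (0 < n)%N ->
  (forall i j, A i *m A j = A j *m A i) ->
  (exists c : R[i], sum_converges_to (fun i => adjmx (A i) *m A i) c%:M) ->
  (forall i, normal_cmx (A i)) /\
  (forall i j, A i *m adjmx (A j) = adjmx (A j) *m A i).
Proof.
move=> _ A_comm [c A_sum].
pose B i := (A i)^t*.
have B_comm i j : B i *m B j = B j *m B i := trmxC_comm (A_comm i j).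
have B_sum : sum_converges_to (fun i => B i *m (B i)^t*) c%:M.
  by apply: eq_sum_converges_to A_sum => i; rewrite adjmxE trmxCK.
have A_adj k j : A k *m (A j)^t* = (A j)^t* *m A k.
  by have := adj_comm B_comm B_sum k j; rewrite /B trmxCK.
split=> [i|i j]; rewrite /normal_cmx !adjmxE; first exact/esym/A_adj.
exact: A_adj.
Qed.
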